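(* Let $R>0$, $X=\{x\in\mathbb{R}^n:\|x\|_\infty\le R\}$ and $\mathcal{X}=X^m\subset\mathbb{R}^{m\times n}$ (the $m\times n$ matrices all of whose rows lie in $X$, equivalently all of whose entries lie in $[-R,R]$), and let $\Pi_{\mathcal{X}}$ be the Euclidean projection onto $\mathcal{X}$. Let $J=\frac1m\mathbf{1}\mathbf{1}^\top\in\mathbb{R}^{m\times m}$. Then for every $x\in\mathbb{R}^{m\times n}$, \[ \|(I-J)\Pi_{\mathcal{X}}(x)\|\leq\|(I-J)x\|, \] where $\|\cdot\|$ is the Frobenius norm. *)

From mathcomp Require Import all_boot all_order all_algebra.
From mathcomp Require Import reals.
Set Implicit Arguments. Unset Strict Implicit. Unset Printing Implicit Defensive.
Import Order.TTheory GRing.Theory Num.Theory.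
Local Open Scope ring_scope.

Definition frob (R : realType) (m n : nat) (A : 'M[R]_(m, n)) : R :=
  Num.sqrt (\sum_(i < m) \sum_(j < n) A i j ^+ 2).

Definition in_boxX (R : realType) (m n : nat) (Rad : R) (A : 'M[R]_(m, n)) : Prop :=
  forall i j, `|A i j| <= Rad.

Definition is_proj (R : realType) (m n : nat) (S : 'M[R]_(m, n) -> Prop)
  (x p : 'M[R]_(m, n)) : Prop :=
  S p /\ forall y, S y -> frob (x - p) <= frob (x - y).

Definition Jmat (R : realType) (m : nat) : 'M[R]_m :=
  \matrix_(i < m, j < m) (m%:R)^-1.

(* The box X^m is a product of intervals, so the projection onto it acts
   entrywise as the clamp to [-Rad, Rad]; (I - J) acts column by column,
   subtracting the column mean; and the mean minimises the sum of squared
   deviations from a constant. Comparing the clamped column with the constant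
   clamp(mean of x) and using that clamping is 1-Lipschitz gives the claim
   column by column. *)

From mathcomp Require Import all_boot all_order all_algebra.
From mathcomp Require Import reals.
From mathcomp Require Import ring lra.
Import Order.TTheory GRing.Theory Num.Theory.
Set Implicit Arguments. Unset Strict Implicit. Unset Printing Implicit Defensive.
Local Open Scope ring_scope.

Definition clamp (R : realFieldType) (Rad a : R) : R :=
  if a < - Rad then - Rad else if Rad < a then Rad else a.

Lemma clamp_norm_le (R : realFieldType) (Rad a : R) :
  0 <= Rad -> `|clamp Rad a| <= Rad.
Proof.
move=> Rad_ge0; rewrite ler_norml /clamp.
by have [|] := ltrP a (- Rad); have [|] := ltrP Rad a;
  move=> *; apply/andP; split; lra.
Qed.

Lemma clamp_monotone_sub (R : realFieldType) (Rad a b : R) : 0 <= Rad ->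
  b <= a -> 0 <= clamp Rad a - clamp Rad b <= a - b.
Proof.
move=> Rad_ge0 le_ba; rewrite /clamp.
by have [|] := ltrP a (- Rad); have [|] := ltrP b (- Rad);
  have [|] := ltrP Rad a; have [|] := ltrP Rad b;
  move=> *; apply/andP; split; lra.
Qed.

Lemma clamp_sqr_sub_le (R : realFieldType) (Rad : R) : 0 <= Rad ->
  forall a b, (clamp Rad a - clamp Rad b) ^+ 2 <= (a - b) ^+ 2.
Proof.
move=> Rad_ge0 a b; wlog le_ba : a b / b <= a.
  move=> hwlog; have [/hwlog //|/ltW/hwlog] := leP b a.
  by rewrite -sqrrN opprB -[(a - b) ^+ 2]sqrrN opprB.
have /andP [d_ge0 d_le] := clamp_monotone_sub Rad_ge0 le_ba.
by rewrite ler_sqr // nnegrE // subr_ge0.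
Qed.

Lemma clamp_nearest_uniq (R : realFieldType) (Rad a q : R) : `|q| <= Rad ->
  (a - q) ^+ 2 <= (a - clamp Rad a) ^+ 2 -> q = clamp Rad a.
Proof.
rewrite ler_norml => /andP [q_ge q_le]; rewrite /clamp.
by have [|] := ltrP a (- Rad); have [|] := ltrP Rad a;
  move=> *; apply/eqP; rewrite eq_le; apply/andP; split; nra.
Qed.

Section Mean.

Variables (R : realFieldType) (m : nat).
Implicit Types (c : 'I_m -> R) (t : R).

Definition mean c : R := m%:R^-1 * \sum_i c i.

Lemma sum_sub_mean c : \sum_i (c i - mean c) = 0.
Proof.
rewrite sumrB sumr_const card_ord /mean; case: m c => [|k] c.
  by rewrite big_ord0 mulr0n subrr.
by rewrite -[(_ * _) *+ _]mulr_natl mulrA mulfV ?mul1r ?subrr ?pnatr_eq0.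
Qed.

(* Expanding around the mean kills the cross term. *)
Lemma sum_sqr_sub_mean_le c t :
  \sum_i (c i - mean c) ^+ 2 <= \sum_i (c i - t) ^+ 2.
Proof.
have -> : \sum_i (c i - t) ^+ 2 = \sum_i ((c i - mean c) ^+ 2
    + 2 * (mean c - t) * (c i - mean c) + (mean c - t) ^+ 2).
  by apply: eq_bigr => i _; ring.
rewrite !big_split /= -mulr_sumr sum_sub_mean mulr0 addr0 lerDl.
by apply: sumr_ge0 => i _; apply: sqr_ge0.
Qed.

Lemma sum_sqr_sub_mean_nonexpansive (f : R -> R) b c :
  (forall u v, (f u - f v) ^+ 2 <= (u - v) ^+ 2) -> (forall i, b i = f (c i)) ->
  \sum_i (b i - mean b) ^+ 2 <= \sum_i (c i - mean c) ^+ 2.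
Proof.
move=> f_nonexp b_eq; apply: le_trans (sum_sqr_sub_mean_le b (f (mean c))) _.
by apply: ler_sum => i _; rewrite b_eq; apply: f_nonexp.
Qed.

End Mean.

Definition sqfrob (R : numDomainType) (m n : nat) (A : 'M[R]_(m, n)) : R :=
  \sum_i \sum_j A i j ^+ 2.

Lemma frob_le (R : realType) (m n : nat) (A B : 'M[R]_(m, n)) :
  (frob A <= frob B) = (sqfrob A <= sqfrob B).
Proof.
rewrite /frob ler_sqrt //.
by apply: sumr_ge0 => i _; apply: sumr_ge0 => j _; apply: sqr_ge0.
Qed.

Lemma sqfrob_eq_off_entry (R : numDomainType) (m n : nat) (A B : 'M[R]_(m, n))
    (i : 'I_m) (j : 'I_n) :
  (forall k l, (k, l) != (i, j) -> A k l = B k l) ->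
  sqfrob A = sqfrob B + (A i j ^+ 2 - B i j ^+ 2).
Proof.
move=> eq_AB; rewrite /sqfrob !pair_bigA /=.
rewrite (bigD1 (i, j)) //= [in RHS](bigD1 (i, j)) //=.
rewrite (eq_bigr (fun k => B k.1 k.2 ^+ 2)); last first.
  by move=> [k l] /= kl; rewrite eq_AB.
by rewrite [RHS]addrC [RHS]addrA subrK.
Qed.

Lemma is_proj_box_clamp (R : realType) (m n : nat) (Rad : R)
    (x p : 'M[R]_(m, n)) :
  0 <= Rad -> is_proj (in_boxX Rad) x p ->
  forall i j, p i j = clamp Rad (x i j).
Proof.
move=> Rad_ge0 [p_box p_min] i j.
pose y := \matrix_(k, l) if (k, l) == (i, j) then clamp Rad (x i j) else p k l.
have y_box : in_boxX Rad y.
  move=> k l; rewrite mxE.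
  by case: ifP => _; [exact: clamp_norm_le | exact: p_box].
have := p_min y y_box.
rewrite frob_le (@sqfrob_eq_off_entry _ _ _ (x - y) (x - p) i j).
  by rewrite lerDl subr_ge0 !mxE eqxx; apply: clamp_nearest_uniq.
by move=> k l kl; rewrite !mxE (negbTE kl).
Qed.

Lemma centering_mxE (R : realType) (m n : nat) (A : 'M[R]_(m, n)) i j :
  ((1%:M - Jmat R m) *m A) i j = A i j - mean (fun k => A k j).
Proof.
rewrite mulmxBl mul1mx !mxE /mean mulr_sumr; congr (_ - _).
by apply: eq_bigr => k _; rewrite mxE.
Qed.

Lemma sqfrob_centering (R : realType) (m n : nat) (A : 'M[R]_(m, n)) :
  sqfrob ((1%:M - Jmat R m) *m A) =
  \sum_j \sum_i (A i j - mean (fun k => A k j)) ^+ 2.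
Proof.
rewrite /sqfrob exchange_big; apply: eq_bigr => j _.
by apply: eq_bigr => i _; rewrite centering_mxE.
Qed.

Theorem lemma3p1 (R : realType) (m n : nat) (Rad : R) (hRad : 0 < Rad)
  (x p : 'M[R]_(m, n)) (hp : is_proj (in_boxX Rad) x p) :
  frob ((1%:M - Jmat R m) *m p) <= frob ((1%:M - Jmat R m) *m x).
Proof.
have p_clamp := is_proj_box_clamp (ltW hRad) hp.
rewrite frob_le !sqfrob_centering; apply: ler_sum => j _.
exact: (sum_sqr_sub_mean_nonexpansive (clamp_sqr_sub_le (ltW hRad))
  (fun i => p_clamp i j)).
Qed.
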